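(* Let $T$ be a nonempty tree. Then $\pi(T)=\nu(T)+1$. Equivalently, $T$ has nullity $m$ if and only if a minimal partition of $T$ into always solvable subtrees has exactly $m+1$ parts.
   Context: For a finite simple graph $G$ with vertex set $\{v_1,\dots,v_n\}$, the closed adjacency matrix $N(G)$ is the $n\times n$ matrix over $\mathbb{Z}_2$ whose $(i,j)$ entry is $1$ iff $i=j$ or $v_i$ is adjacent to $v_j$. The nullity is $\nu(G):=\dim\operatorname{Ker}(N(G))$ over $\mathbb{Z}_2$, and $G$ is always solvable if $\nu(G)=0$. A partition of a tree $T$ into always solvable subtrees is a set $\{T_1,\dots,T_k\}$ of subtrees (connected induced subgraphs) of $T$ whose vertex sets are pairwise disjoint with union $V(T)$, each $T_i$ being always solvable (such partitions exist, e.g. into single vertices, since $K_1$ is always solvable). $\pi(T)$ denotes the minimum cardinality $k$ of such a partition. *)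

From mathcomp Require Import all_boot all_order all_algebra.
Set Implicit Arguments. Unset Strict Implicit. Unset Printing Implicit Defensive.
Import GRing.Theory.
Local Open Scope ring_scope.

Definition simple_graph (V : finType) (e : rel V) : Prop :=
  symmetric e /\ irreflexive e.

Definition induced_rel (V : finType) (e : rel V) (S : {set V}) : rel V :=
  fun x y => [&& x \in S, y \in S & e x y].

Definition connected_set (V : finType) (e : rel V) (S : {set V}) : Prop :=
  S != set0 /\ forall x y, x \in S -> y \in S -> connect (induced_rel e S) x y.

Definition remove_edge (V : finType) (e : rel V) (u v : V) : rel V :=
  fun x y => e x y && ~~ (((x == u) && (y == v)) || ((x == v) && (y == u))).

Definition acyclic (V : finType) (e : rel V) : Prop :=
  forall u v, e u v -> ~~ connect (remove_edge e u v) u v.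

Definition is_tree (V : finType) (e : rel V) : Prop :=
  simple_graph e /\ connected_set e [set: V] /\ acyclic e.

Definition closed_adj (V : finType) (e : rel V) (S : {set V}) :
  'M['F_2]_#|S| :=
  \matrix_(i, j) (((i == j) || e (enum_val i) (enum_val j)) : nat)%:R.

Definition nullity (V : finType) (e : rel V) (S : {set V}) : nat :=
  (#|S| - \rank (closed_adj e S))%N.

Definition always_solvable (V : finType) (e : rel V) (S : {set V}) : Prop :=
  nullity e S = 0%N.

(* A partition of T into always solvable subtrees: a partition P of the
   vertex set (blocks nonempty, pairwise disjoint, covering V) each of whose
   blocks induces a connected (hence a sub-tree) always solvable subgraph. *)
Definition as_tree_partition (V : finType) (e : rel V) (P : {set {set V}})
  : Prop :=
  partition P [set: V] /\
  forall B, B \in P -> connected_set e B /\ always_solvable e B.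

Definition is_pi (V : finType) (e : rel V) (k : nat) : Prop :=
  (exists P, as_tree_partition e P /\ #|P| = k) /\
  (forall P, as_tree_partition e P -> (k <= #|P|)%N).

From mathcomp Require Import all_boot all_order all_algebra.
Set Implicit Arguments. Unset Strict Implicit. Unset Printing Implicit Defensive.
Import GRing.Theory.

(* Cut a tree S at an edge uv into the subtrees
   S1 (containing u) and S2 (containing v).  Since N is symmetric, summing
   f * N(g) over S1 shows that kernel vectors f, g of S satisfy
   f(u) g(v) = f(v) g(u), and that every kernel vector of S1 vanishes at u
   as soon as some kernel vector x of S has x(v) = 1.  Counting the kernel
   vectors of S that vanish at u and v then gives
   nu(S) <= nu(S1) + nu(S2) + 1, with equality when x(u) = x(v) = 1 for some
   kernel vector x; an edge with this property exists whenever nu(S) > 0.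
   Cutting at such edges yields a partition into nu(S) + 1 always solvable
   subtrees, and cutting an arbitrary partition at an edge joining two of its
   blocks shows, by induction, that it has at least nu(S) + 1 blocks. *)

Section FiniteField.
Local Open Scope ring_scope.

Lemma card_lker (F : finFieldType) m n (A : 'M[F]_(m, n)) :
  #|[set x : 'rV[F]_m | x *m A == 0]| = (#|F| ^ (m - \rank A))%N.
Proof.
rewrite -mxrank_ker; set B := row_base (kermx A).
have -> : [set x : 'rV[F]_m | x *m A == 0] =
          [set w *m B | w in [set: 'rV_(\rank (kermx A))]].
  apply/setP=> x; rewrite inE -sub_kermx -(eq_row_base (kermx A)).
  by apply/submxP/imsetP => [[w ->]|[w _ ->]]; exists w.
rewrite card_imset; last exact/row_free_inj/row_base_free.
by rewrite cardsT card_mx mul1n.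
Qed.

Fact pchar_F2 : 2 \in [pchar 'F_2]. Proof. exact: pchar_Fp. Qed.

Lemma F2_cases (a : 'F_2) : a = 0 \/ a = 1.
Proof. by case: a => [[|[|//]]] i; [left | right]; apply: val_inj. Qed.

Lemma F2_eq1 (a : 'F_2) : a != 0 -> a = 1.
Proof. by case: (F2_cases a) => ->; rewrite ?eqxx. Qed.

Lemma F2_cross_eq (a b c d : 'F_2) : a * d = b * c ->
  (a != 0) || (b != 0) -> (c != 0) || (d != 0) -> a = c /\ b = d.
Proof.
case: (F2_cases a) (F2_cases b) (F2_cases c) (F2_cases d) => -> [] -> [] -> [] ->;
  rewrite ?(mul0r, mulr0, mul1r, eqxx, oner_eq0) //= => /eqP;
  by rewrite ?oner_eq0 // eq_sym oner_eq0.
Qed.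

End FiniteField.

Lemma induced_rel_sym (T : finType) (r : rel T) (S : {set T}) :
  symmetric r -> symmetric (induced_rel r S).
Proof. by move=> sym_r x y; rewrite /induced_rel sym_r andbCA. Qed.

Lemma connect_induced (T : finType) (r : rel T) a y :
  connect r a y -> connect (induced_rel r [set z | connect r a z]) a y.
Proof.
case/connectP=> p + ->; elim/last_ind: p => [|p z IHp]; first by rewrite connect0.
rewrite rcons_path last_rcons => /andP[pth rz].
have az : connect r a (last a p) by apply/connectP; exists p.
apply: connect_trans (IHp pth) (connect1 _).
by rewrite /induced_rel !inE az (connect_trans az (connect1 rz)).
Qed.

Section EdgeCut.
Variables (V : finType) (e : rel V).
Hypothesis sym_e : symmetric e.

Definition edge_cut (S1 S2 : {set V}) (u v : V) : Prop :=
  [/\ [disjoint S1 & S2], u \in S1, v \in S2, e u v &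
      forall x y, x \in S1 -> y \in S2 -> e x y -> x = u /\ y = v].

Lemma edge_cut_sym S1 S2 u v : edge_cut S1 S2 u v -> edge_cut S2 S1 v u.
Proof.
case=> dis uS1 vS2 euv cross; split; rewrite 1?disjoint_sym 1?sym_e //.
move=> x y xS2 yS1 exy.
by have /(cross y x yS1 xS2)[-> ->] : e y x by rewrite sym_e.
Qed.

Lemma edge_cut_proper S1 S2 u v : edge_cut S1 S2 u v ->
  S1 \proper S1 :|: S2 /\ S2 \proper S1 :|: S2.
Proof.
case=> dis uS1 vS2 _ _; split; [apply: properUl | apply: properUr]; apply/subsetPn.
  by exists v; rewrite // (disjointFl dis vS2).
by exists u; rewrite // (disjointFr dis uS1).
Qed.

Lemma edge_cut_side S1 S2 u v B : edge_cut S1 S2 u v -> connected_set e B ->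
  B \subset S1 :|: S2 -> ~~ ((u \in B) && (v \in B)) -> (B \subset S1) || (B \subset S2).
Proof.
move=> cut [/set0Pn[b bB] conB] BS uvB.
have [_ _ _ _ cross] := cut; have [_ _ _ _ cross'] := edge_cut_sym cut.
have inS2 y : y \in B -> y \notin S1 -> y \in S2.
  by move=> yB; move: (subsetP BS y yB); rewrite inE => /orP[->|].
have sameS1 y : y \in B -> (b \in S1) = (y \in S1).
  move=> yB; apply: (closed_connect _ (conB b y bB yB)) => x z /and3P[xB zB exz].
  apply/idP/idP => [xS1 | zS1]; apply: contraR uvB => /inS2 yS2.
    by have [<- <-] := cross x z xS1 (yS2 zB) exz; rewrite xB zB.
  by have [<- <-] := cross' x z (yS2 xB) zS1 exz; rewrite xB zB.
case bS1: (b \in S1).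
  by apply/orP; left; apply/subsetP => y yB; rewrite -(sameS1 y yB).
by apply/orP; right; apply/subsetP => y yB; rewrite inS2 // -(sameS1 y yB) bS1.
Qed.

End EdgeCut.

Section TreeCut.
Variables (V : finType) (e : rel V).
Hypotheses (sym_e : symmetric e) (acyc : acyclic e).

Lemma remove_edge_sym u v : symmetric (remove_edge e u v).
Proof.
move=> x y; rewrite /remove_edge sym_e orbC.
by rewrite [(y == u) && _]andbC [(y == v) && _]andbC.
Qed.

Lemma connected_set_connect (r : rel V) a : subrel r e -> symmetric r ->
  connected_set e [set y | connect r a y].
Proof.
move=> sub_re sym_r; set A := [set y | _].
have symA : connect_sym (induced_rel e A) by apply/sym_connect_sym/induced_rel_sym.
have conA y : y \in A -> connect (induced_rel e A) a y.
  rewrite inE => /connect_induced; apply: connect_sub => x z /and3P[xA zA rxz].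
  by apply: connect1; rewrite /induced_rel xA zA sub_re.
split; first by apply/set0Pn; exists a; rewrite inE connect0.
by move=> x y /conA ax /conA ay; apply: connect_trans ay; rewrite symA.
Qed.

Lemma tree_cut S u v : connected_set e S -> u \in S -> v \in S -> e u v ->
  exists S1 S2, [/\ S = S1 :|: S2, edge_cut e S1 S2 u v,
                    connected_set e S1 & connected_set e S2].
Proof.
move=> [_ conS] uS vS euv.
pose R := induced_rel (remove_edge e u v) S.
have symR : symmetric R := induced_rel_sym S (remove_edge_sym u v).
have subR : subrel R e by move=> x y /and3P[_ _ /andP[]].
have noRuv : ~~ connect R u v.
  apply: contra (acyc euv); apply: connect_sub => x y /and3P[_ _ rxy].
  exact: connect1.
have RE x y : x \in S -> y \in S -> e x y ->
    R x y || (((x == u) && (y == v)) || ((x == v) && (y == u))).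
  by move=> xS yS exy; rewrite /R /induced_rel xS yS /remove_edge exy orNb.
pose S1 := [set w | connect R u w]; pose S2 := [set w | connect R v w].
have same z x y : R x y -> connect R z x = connect R z y.
  by move=> Rxy; apply: (same_connect1r (sym_connect_sym symR) Rxy).
have SE : S = S1 :|: S2.
  apply/setP => w; rewrite !inE; apply/idP/idP => [wS | ].
    suff /closed_connect/(_ u w (conS u w uS wS)) :
        closed (induced_rel e S) [pred w | connect R u w || connect R v w].
      by rewrite !inE connect0 => <-.
    move=> x y /and3P[xS yS exy]; rewrite !inE.
    case/orP: (RE x y xS yS exy) => [Rxy | /orP[] /andP[/eqP-> /eqP->]].
    - by rewrite (same u _ _ Rxy) (same v _ _ Rxy).
    - by rewrite !connect0 !orbT.
    - by rewrite !connect0 !orbT.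
  have closedS : closed R (mem S) by move=> x y /and3P[-> ->].
  by case/orP => /(closed_connect closedS); rewrite ?uS ?vS => <-.
have dis : [disjoint S1 & S2].
  apply/pred0P => w /=; rewrite !inE; apply: contraNF noRuv => /andP[uw vw].
  by apply: connect_trans uw _; rewrite (sym_connect_sym symR).
exists S1, S2; split => //.
- split; rewrite ?inE ?connect0 // => x y xS1 yS2 exy.
  have xS : x \in S by rewrite SE inE xS1.
  have yS : y \in S by rewrite SE inE yS2 orbT.
  case/orP: (RE x y xS yS exy) => [Rxy | /orP[/andP[/eqP-> /eqP->] // | /andP[/eqP xv _]]].
    have yS1 : y \in S1 by move: xS1; rewrite !inE (same u _ _ Rxy).
    by rewrite (disjointFr dis yS1) in yS2.
  by move: xS1; rewrite inE xv (negbTE noRuv).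
- exact: connected_set_connect subR symR.
- exact: connected_set_connect subR symR.
Qed.

End TreeCut.

Section ClosedKernel.
Variables (V : finType) (e : rel V).
Hypothesis sym_e : symmetric e.
Local Open Scope ring_scope.
Local Notation vec := {ffun V -> 'F_2}.
Implicit Types (S T : {set V}) (f g h x : vec).

Definition cadj (y w : V) : bool := (y == w) || e y w.

Lemma cadjC y w : cadj y w = cadj w y.
Proof. by rewrite /cadj eq_sym sym_e. Qed.

(* Vectors of F_2^S are encoded as functions on V vanishing off S; then
   cadj_sum S f is N(G[S]) f and cadj_ker S is the kernel of N(G[S]). *)
Definition cadj_sum S f w : 'F_2 := \sum_(y in S) (cadj y w)%:R * f y.

Definition cadj_ker S : {set vec} :=
  [set f : vec | [forall y, (y \notin S) ==> (f y == 0)] &&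
                 [forall w, (w \in S) ==> (cadj_sum S f w == 0)]].

Lemma cadj_kerP S f :
  reflect ((forall y, y \notin S -> f y = 0) /\ (forall w, w \in S -> cadj_sum S f w = 0))
          (f \in cadj_ker S).
Proof.
rewrite inE; apply: (iffP andP) => [[/forallP f0 /forallP N0] | [f0 N0]]; split.
- by move=> y yS; apply/eqP; apply: (implyP (f0 y)).
- by move=> w wS; apply/eqP; apply: (implyP (N0 w)).
- by apply/forallP => y; apply/implyP => /f0 ->.
- by apply/forallP => w; apply/implyP => /N0 ->.
Qed.

Lemma card_cadj_ker S : #|cadj_ker S| = (2 ^ nullity e S)%N.
Proof.
rewrite /nullity; have := card_lker (closed_adj e S); rewrite card_Fp // => <-.
pose g (r : 'rV['F_2]_#|S|) := [ffun v => \sum_(i | enum_val i == v) r 0 i].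
have gE r j : g r (enum_val j) = r 0 j.
  by rewrite ffunE (big_pred1 j) // => i /=; apply: (inj_eq enum_val_inj).
have g_out r y : y \notin S -> g r y = 0.
  move=> yS; rewrite ffunE big_pred0 // => i; apply: contraNF yS => /eqP <-.
  exact: enum_valP.
have g_inj : injective g by move=> r r' grr; apply/rowP => j; rewrite -!gE grr.
have g_sum r j : cadj_sum S (g r) (enum_val j) = (r *m closed_adj e S) 0 j.
  rewrite /cadj_sum mxE (big_enum_val (fun y => (cadj y (enum_val j))%:R * g r y)).
  by apply: eq_bigr => i _; rewrite gE mxE mulrC /cadj (inj_eq enum_val_inj).
rewrite -(card_imset _ g_inj); apply: eq_card => f.
apply/cadj_kerP/imsetP => [[f0 N0] | [r]].
  have gf : g (\row_i f (enum_val i)) = f.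
    apply/ffunP => y; case: (boolP (y \in S)) => yS; last by rewrite g_out ?f0.
    by rewrite -(enum_rankK_in yS yS) gE mxE.
  exists (\row_i f (enum_val i)) => //; rewrite inE; apply/eqP/rowP => j.
  by rewrite [RHS]mxE -g_sum gf N0 ?enum_valP.
rewrite inE => /eqP rN0 ->; split => [y | w wS]; first exact: g_out.
by rewrite -(enum_rankK_in wS wS) g_sum rN0 mxE.
Qed.

Lemma cadj_ker_out S f y : f \in cadj_ker S -> y \notin S -> f y = 0.
Proof. by case/cadj_kerP => f0 _; apply: f0. Qed.

Lemma cadj_sumD S f g w : cadj_sum S (f + g) w = cadj_sum S f w + cadj_sum S g w.
Proof. by rewrite /cadj_sum -big_split; apply: eq_bigr => y _; rewrite ffunE mulrDr. Qed.

Lemma cadj_ker0 S : 0 \in cadj_ker S.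
Proof.
apply/cadj_kerP; split => [y _ | w _]; first by rewrite ffunE.
by rewrite /cadj_sum big1 // => y _; rewrite ffunE mulr0.
Qed.

Lemma cadj_kerD S f g : f \in cadj_ker S -> g \in cadj_ker S -> f + g \in cadj_ker S.
Proof.
move=> /cadj_kerP[f0 fN0] /cadj_kerP[g0 gN0]; apply/cadj_kerP.
split => [y yS | w wS]; first by rewrite ffunE f0 ?g0 ?addr0.
by rewrite cadj_sumD fN0 ?gN0 ?addr0.
Qed.

Lemma eq_cadj_sum S f g w : {in S, f =1 g} -> cadj_sum S f w = cadj_sum S g w.
Proof. by move=> fg; apply: eq_bigr => y yS; rewrite fg. Qed.

Lemma cadj_sum_sym S f g :
  \sum_(w in S) g w * cadj_sum S f w = \sum_(w in S) f w * cadj_sum S g w.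
Proof.
rewrite /cadj_sum; under eq_bigr do rewrite big_distrr /=.
rewrite exchange_big /=; under [RHS]eq_bigr do rewrite big_distrr /=.
apply: eq_bigr => y _; apply: eq_bigr => w _.
by rewrite cadjC mulrCA [RHS]mulrCA (mulrC (f _)).
Qed.

Lemma cadj_sumU S1 S2 f w : [disjoint S1 & S2] ->
  cadj_sum (S1 :|: S2) f w = cadj_sum S1 f w + cadj_sum S2 f w.
Proof.
move=> dis; rewrite /cadj_sum -bigU //; apply: eq_bigl => y; by rewrite inE.
Qed.

Lemma cadj_sum_cut S1 S2 u v f w : edge_cut e S1 S2 u v -> w \in S1 ->
  cadj_sum S2 f w = (w == u)%:R * f v.
Proof.
move=> [dis _ vS2 euv cross] wS1.
have cadjE y : y \in S2 -> cadj y w = (w == u) && (y == v).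
  move=> yS2; rewrite /cadj (_ : (y == w) = false) /=; last first.
    by apply: contraTF yS2 => /eqP->; rewrite (disjointFr dis wS1).
  rewrite sym_e; apply/idP/andP => [ewy | [/eqP-> /eqP->] //].
  by have [-> ->] := cross _ _ wS1 yS2 ewy; rewrite !eqxx.
rewrite /cadj_sum (bigD1 v) //= big1 ?addr0 => [|y /andP[yS2 /negPf yv]].
  by rewrite cadjE // eqxx andbT.
by rewrite cadjE // yv andbF mul0r.
Qed.

Definition restr T f : vec := [ffun y => if y \in T then f y else 0].

Section Cut.
Variables (S1 S2 : {set V}) (u v : V).
Hypothesis cut : edge_cut e S1 S2 u v.
Let S := S1 :|: S2.

Lemma cadj_ker_cut_sum f w : f \in cadj_ker S -> w \in S1 ->
  cadj_sum S1 f w = (w == u)%:R * f v.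
Proof.
move=> /cadj_kerP[_ N0] wS1; have [dis _ _ _ _] := cut.
apply/eqP; rewrite -[X in _ == X](oppr_pchar2 pchar_F2) -addr_eq0.
rewrite -(cadj_sum_cut f cut wS1).
by rewrite -cadj_sumU // N0 // inE wS1.
Qed.

Lemma dot_cadj_ker_cut f g : f \in cadj_ker S ->
  \sum_(w in S1) g w * cadj_sum S1 f w = g u * f v.
Proof.
move=> fK; have [_ uS1 _ _ _] := cut.
under eq_bigr => w wS1 do rewrite (cadj_ker_cut_sum fK wS1).
rewrite (bigD1 u) //= eqxx mul1r big1 ?addr0 // => w /andP[_ /negPf->].
by rewrite mul0r mulr0.
Qed.

Lemma cadj_ker_cut_cross f g : f \in cadj_ker S -> g \in cadj_ker S ->
  f u * g v = f v * g u.
Proof.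
move=> fK gK.
by rewrite -(dot_cadj_ker_cut f gK) cadj_sum_sym (dot_cadj_ker_cut g fK) mulrC.
Qed.

Lemma cadj_ker_cut_orth g x : g \in cadj_ker S1 -> x \in cadj_ker S ->
  g u * x v = 0.
Proof.
move=> /cadj_kerP[_ gN0] xK.
by rewrite -(dot_cadj_ker_cut g xK) cadj_sum_sym big1 // => w wS1; rewrite gN0 ?mulr0.
Qed.

Lemma cadj_ker_cut_restr f : f \in cadj_ker S -> f v = 0 ->
  restr S1 f \in cadj_ker S1.
Proof.
move=> fK fv0; apply/cadj_kerP; split => [y yS1 | w wS1].
  by rewrite ffunE (negbTE yS1).
rewrite (@eq_cadj_sum _ _ f) ?(cadj_ker_cut_sum fK wS1) ?fv0 ?mulr0 // => y yS1.
by rewrite ffunE yS1.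
Qed.

Lemma cadj_ker_cut_ext g x : g \in cadj_ker S1 -> x \in cadj_ker S -> x v = 1 ->
  g \in cadj_ker S.
Proof.
move=> gK xK xv1; have [dis uS1 vS2 _ _] := cut.
have gu0 : g u = 0 by rewrite -[g u]mulr1 -xv1 (cadj_ker_cut_orth gK xK).
have /cadj_kerP[g0 gN0] := gK.
have gS2 y : y \in S2 -> g y = 0 by move=> yS2; rewrite g0 // (disjointFl dis yS2).
apply/cadj_kerP; split => [y | w]; first by rewrite inE negb_or => /andP[/g0].
rewrite cadj_sumU // inE => /orP[wS1 | wS2].
  by rewrite gN0 // (cadj_sum_cut g cut wS1) gS2 ?mulr0 ?addr0.
rewrite (cadj_sum_cut g (edge_cut_sym sym_e cut) wS2) gu0 mulr0 add0r.
by rewrite /cadj_sum big1 // => y /gS2->; rewrite mulr0.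
Qed.

End Cut.

Definition cadj_ker_vanish S u v := [set f in cadj_ker S | (f u == 0) && (f v == 0)].

Lemma card_cadj_ker_ge_vanish S u v x :
  x \in cadj_ker S -> x \notin cadj_ker_vanish S u v ->
  (2 * #|cadj_ker_vanish S u v| <= #|cadj_ker S|)%N.
Proof.
move=> xK xK0; set K0 := cadj_ker_vanish S u v.
rewrite mul2n -addnn -{2}(card_imset K0 (addIr x)) -cardsUI.
have -> : K0 :&: [set h + x | h : vec in K0] = set0.
  apply/eqP; rewrite -subset0; apply/subsetP => f /setIP[fK0 /imsetP[h hK0 fE]].
  have /setIdP[_ /andP[/eqP hu /eqP hv]] := hK0.
  move: fK0; rewrite fE => /setIdP[_]; rewrite !ffunE hu hv !add0r => xuv.
  by case/negP: xK0; apply/setIdP.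
rewrite cards0 addn0; apply/subset_leq_card; rewrite subUset; apply/andP; split.
  by apply/subsetP => f /setIdP[].
by apply/subsetP => _ /imsetP[h /setIdP[hK _] ->]; exact: cadj_kerD.
Qed.

Section CutCount.
Variables (S1 S2 : {set V}) (u v : V).
Hypothesis cut : edge_cut e S1 S2 u v.
Let S := S1 :|: S2.
Let K0 := cadj_ker_vanish S u v.

Lemma card_cadj_ker_cut_le_vanish : (#|cadj_ker S| <= 2 * #|K0|)%N.
Proof.
have [f0 /andP[f0K f0K0] | K_K0] := pickP [pred f | (f \in cadj_ker S) && (f \notin K0)];
  last first.
  apply: leq_trans (leq_pmull _ (isT : 0 < 2)%N); apply/subset_leq_card/subsetP => f fK.
  by move: (K_K0 f); rewrite /= fK => /negbFE.
have nz f : f \in cadj_ker S -> f \notin K0 -> (f u != 0) || (f v != 0).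
  by move=> fK; apply: contraR; rewrite negb_or !negbK => fuv; apply/setIdP.
have K_cover : cadj_ker S \subset K0 :|: [set h + f0 | h : vec in K0].
  apply/subsetP => f fK; rewrite inE; case: (boolP (f \in K0)) => //= fK0.
  apply/imsetP; exists (f + f0); last first.
    by apply/ffunP => y; rewrite !ffunE -addrA (addrr_pchar2 pchar_F2) addr0.
  have [fu fv] :=
    F2_cross_eq (cadj_ker_cut_cross cut fK f0K) (nz f fK fK0) (nz f0 f0K f0K0).
  apply/setIdP; split; first exact: cadj_kerD.
  by rewrite !ffunE fu fv !(addrr_pchar2 pchar_F2) eqxx.
rewrite mul2n -addnn; apply: leq_trans (subset_leq_card K_cover) _.
by apply: leq_trans (leq_card_setU _ _) _; rewrite leq_add2l leq_imset_card.
Qed.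

Lemma card_cadj_ker_vanish_cut_le : (#|K0| <= #|cadj_ker S1| * #|cadj_ker S2|)%N.
Proof.
have [dis _ _ _ _] := cut; have cut' := edge_cut_sym sym_e cut.
rewrite -cardsX -(@card_in_imset _ _ (fun f => (restr S1 f, restr S2 f))).
  apply/subset_leq_card/subsetP => _ /imsetP[f /setIdP[fK /andP[/eqP fu0 /eqP fv0]] ->].
  have fK' : f \in cadj_ker (S2 :|: S1) by rewrite setUC.
  by rewrite inE /= (cadj_ker_cut_restr cut fK fv0) (cadj_ker_cut_restr cut' fK' fu0).
move=> f g /setIdP[/cadj_kerP[f0 _] _] /setIdP[/cadj_kerP[g0 _] _] [fg1 fg2].
apply/ffunP => y; move: (congr1 (fun h => h y) fg1) (congr1 (fun h => h y) fg2).
rewrite !ffunE; case: (boolP (y \in S1)) => // yS1 _; case: (boolP (y \in S2)) => // yS2 _.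
by rewrite f0 ?g0 // inE negb_or yS1 yS2.
Qed.

Lemma card_cadj_ker_vanish_cut_ge x : x \in cadj_ker S -> x u = 1 -> x v = 1 ->
  (#|cadj_ker S1| * #|cadj_ker S2| <= #|K0|)%N.
Proof.
move=> xK xu1 xv1; have [dis uS1 vS2 _ _] := cut; have cut' := edge_cut_sym sym_e cut.
have xK' : x \in cadj_ker (S2 :|: S1) by rewrite setUC.
have uS2 : u \notin S2 := negbT (disjointFr dis uS1).
have vS1 : v \notin S1 := negbT (disjointFl dis vS2).
rewrite -cardsX -(@card_in_imset _ _ (fun p : vec * vec => p.1 + p.2)).
  apply/subset_leq_card/subsetP => _ /imsetP[[g1 g2] /setXP[/= g1K g2K] ->].
  have g1u : g1 u = 0 by rewrite -[g1 u]mulr1 -xv1 (cadj_ker_cut_orth cut g1K xK).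
  have g2v : g2 v = 0 by rewrite -[g2 v]mulr1 -xu1 (cadj_ker_cut_orth cut' g2K xK').
  have g2K' : g2 \in cadj_ker S by rewrite /S setUC (cadj_ker_cut_ext cut' g2K xK' xu1).
  apply/setIdP; split; first by rewrite cadj_kerD ?(cadj_ker_cut_ext cut g1K xK xv1).
  rewrite !ffunE g1u g2v.
  by rewrite (cadj_ker_out g2K uS2) (cadj_ker_out g1K vS1) addr0 eqxx.
move=> [g1 g2] [h1 h2] /setXP[/= g1K g2K] /setXP[/= h1K h2K] /= /ffunP gh.
suff eq12 y : g1 y = h1 y /\ g2 y = h2 y.
  by congr (_, _); apply/ffunP => y; have [] := eq12 y.
move: (gh y); rewrite !ffunE; case: (boolP (y \in S1)) => yS1.
  have yS2 : y \notin S2 := negbT (disjointFr dis yS1).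
  by rewrite (cadj_ker_out g2K yS2) (cadj_ker_out h2K yS2) !addr0 => ->.
by rewrite (cadj_ker_out g1K yS1) (cadj_ker_out h1K yS1) !add0r => ->.
Qed.

Lemma nullity_cut_le : (nullity e S <= (nullity e S1 + nullity e S2).+1)%N.
Proof.
rewrite -(leq_exp2l _ _ (isT : 1 < 2)%N) expnS expnD -!card_cadj_ker.
apply: leq_trans card_cadj_ker_cut_le_vanish _.
by rewrite leq_mul2l card_cadj_ker_vanish_cut_le orbT.
Qed.

Lemma nullity_cut x : x \in cadj_ker S -> x u = 1 -> x v = 1 ->
  nullity e S = (nullity e S1 + nullity e S2).+1.
Proof.
move=> xK xu1 xv1; apply/eqP; rewrite eqn_leq nullity_cut_le.
rewrite -(leq_exp2l _ _ (isT : 1 < 2)%N) expnS expnD -!card_cadj_ker.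
have xK0 : x \notin K0 by apply/negP => /setIdP[_]; rewrite xu1 oner_eq0.
apply: leq_trans (card_cadj_ker_ge_vanish xK xK0).
by rewrite leq_mul2l (card_cadj_ker_vanish_cut_ge xK xu1 xv1) orbT.
Qed.

End CutCount.

Lemma cadj_ker_nbr S x u : x \in cadj_ker S -> u \in S -> x u = 1 ->
  exists2 v, v \in S & e u v /\ x v = 1.
Proof.
move=> /cadj_kerP[_ N0] uS xu1.
have [v /and3P[vS euv /eqP xv1] | none] := pickP [pred v | [&& v \in S, e u v & x v == 1]].
  by exists v.
have := N0 u uS; rewrite /cadj_sum (bigD1 u) //= big1 => [|y /andP[yS yu]].
  by rewrite /cadj eqxx mul1r xu1 addr0 => /eqP; rewrite oner_eq0.
rewrite /cadj (negbTE yu) sym_e /=; case: (F2_cases (x y)) => xy; rewrite xy ?mulr0 //.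
by move: (none y); rewrite /= yS xy eqxx andbT /= => ->; rewrite mul0r.
Qed.

Lemma cadj_ker_edge S : (0 < nullity e S)%N -> exists x, x \in cadj_ker S /\
  exists u v, [/\ u \in S, v \in S, e u v, x u = 1 & x v = 1].
Proof.
move=> nu_gt0.
have [x /setD1P[x0 xK]] : exists x, x \in cadj_ker S :\ (0 : vec).
  apply/set0Pn; rewrite -card_gt0 -ltnS.
  have := cardsD1 (0 : vec) (cadj_ker S); rewrite cadj_ker0 card_cadj_ker add1n => <-.
  by rewrite -{1}(expn0 2) ltn_exp2l.
have /existsP[u xu0] : [exists u, x u != 0].
  apply: contraR x0 => /existsPn x0; apply/eqP/ffunP => u; rewrite ffunE.
  exact/eqP/negbNE.
have uS : u \in S by apply: contraR xu0 => /(cadj_ker_out xK) ->.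
have [v vS [euv xv1]] := cadj_ker_nbr xK uS (F2_eq1 xu0).
by exists x; split => //; exists u, v; split => //; apply: F2_eq1.
Qed.

End ClosedKernel.

Section Partitions.
Variable T : finType.
Implicit Types (P : {set {set T}}) (D : {set T}).

Lemma partitionU P1 P2 D1 D2 : partition P1 D1 -> partition P2 D2 ->
  [disjoint D1 & D2] -> partition (P1 :|: P2) (D1 :|: D2).
Proof.
move=> /and3P[/eqP c1 t1 n1] /and3P[/eqP c2 t2 n2] dis; apply/and3P; split.
- by rewrite /cover bigcup_setU -/(cover P1) -/(cover P2) c1 c2.
- by apply: trivIsetU; rewrite // c1 c2.
- by rewrite inE negb_or n1 n2.
Qed.

Lemma card_partitionU P1 P2 D1 D2 : partition P1 D1 -> partition P2 D2 ->
  [disjoint D1 & D2] -> #|P1 :|: P2| = #|P1| + #|P2|.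
Proof.
move=> pP1 pP2 dis; rewrite -cardsUI.
suff -> : P1 :&: P2 = set0 by rewrite cards0 addn0.
apply/eqP; rewrite -subset0; apply/subsetP => B /setIP[B1 B2].
case/negP: (partition_neq0 pP1 B1); rewrite -subset0 -(disjoint_setI0 dis).
by rewrite subsetI (partitionS pP1 B1) (partitionS pP2 B2).
Qed.

Lemma partition_ssetI P D1 D2 : partition P (D1 :|: D2) -> [disjoint D1 & D2] ->
  {in P, forall B : {set T}, (B \subset D1) || (B \subset D2)} -> partition (P ::&: D1) D1.
Proof.
move=> pP dis side; apply/and3P; split.
- rewrite eqEsubset (subset_trans (cover_setI _ _)) ?subsetIr //=.
  apply/subsetP => y yD1.
  have yP : y \in cover P by rewrite (cover_partition pP) inE yD1.
  apply/bigcupP; exists (pblock P y); last by rewrite mem_pblock.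
  rewrite inE pblock_mem //=; case/orP: (side _ (pblock_mem yP)) => // /subsetP/(_ y).
  by rewrite mem_pblock yP (disjointFr dis yD1) => /(_ isT).
- exact: trivIsetI (partition_trivIset pP).
- by rewrite inE (partition0 pP).
Qed.

End Partitions.

Section SolvablePartition.
Variables (V : finType) (e : rel V).
Hypotheses (sym_e : symmetric e) (acyc : acyclic e).

Lemma connected_mem_partition S P : connected_set e S -> partition P S ->
  (forall x y, x \in S -> y \in S -> e x y -> pblock P x = pblock P y) -> S \in P.
Proof.
move=> [/set0Pn[a aS] conS] pP same_block.
have aP : a \in cover P by rewrite (cover_partition pP).
suff -> : S = pblock P a by rewrite pblock_mem.
apply/eqP; rewrite eqEsubset; apply/andP; split; last exact: partitionS (pblock_mem aP).
apply/subsetP => y yS; rewrite -eq_pblock ?(partition_trivIset pP) //.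
suff /closed_connect/(_ a y (conS a y aS yS)) :
    closed (induced_rel e S) [pred z | pblock P z == pblock P a].
  by rewrite !inE eqxx => /esym/eqP->.
by move=> x z /and3P[xS zS exz]; rewrite !inE (same_block x z).
Qed.

Definition solvable_partition (P : {set {set V}}) (S : {set V}) : Prop :=
  partition P S /\ forall B, B \in P -> connected_set e B /\ always_solvable e B.

Lemma exists_solvable_partition S : connected_set e S ->
  exists2 P, solvable_partition P S & #|P| = (nullity e S).+1.
Proof.
have [n] := ubnP #|S|; elim: n S => // n IH S ltSn conS.
have [nu0 | nu_gt0] := posnP (nullity e S).
  exists [set S]; last by rewrite cards1 nu0.
  split; last by move=> B /set1P->.
  by apply/and3P; rewrite cover1 trivIset1 inE eq_sym; case: conS => ->.
have [x [xK [u [v [uS vS euv xu1 xv1]]]]] := cadj_ker_edge sym_e nu_gt0.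
have [S1 [S2 [SE cut con1 con2]]] := tree_cut sym_e acyc conS uS vS euv.
have [dis _ _ _ _] := cut; have [lt1 lt2] := edge_cut_proper cut.
rewrite SE in ltSn xK *.
have [P1 [pP1 solP1] c1] := IH S1 (leq_trans (proper_card lt1) (ltnSE ltSn)) con1.
have [P2 [pP2 solP2] c2] := IH S2 (leq_trans (proper_card lt2) (ltnSE ltSn)) con2.
exists (P1 :|: P2).
  split; first exact: partitionU.
  by move=> B /setUP[/solP1 | /solP2].
rewrite (card_partitionU pP1 pP2 dis) c1 c2.
by rewrite (nullity_cut sym_e cut xK xu1 xv1) addSn addnS.
Qed.

Lemma solvable_partition_card S P : connected_set e S -> solvable_partition P S ->
  (nullity e S).+1 <= #|P|.
Proof.
have [n] := ubnP #|S|; elim: n S P => // n IH S P ltSn conS [pP solP].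
have [[u v] /= /and4P[uS vS euv uv_apart] | no_cross] := pickP [pred p : V * V |
    [&& p.1 \in S, p.2 \in S, e p.1 p.2 & pblock P p.1 != pblock P p.2]]; last first.
  have SP : S \in P.
    apply: connected_mem_partition => // x y xS yS exy; apply/eqP.
    by move: (no_cross (x, y)); rewrite /= xS yS exy /= => /negbFE.
  have [_ solS] := solP S SP.
  by rewrite solS card_gt0; apply/set0Pn; exists S.
have [S1 [S2 [SE cut con1 con2]]] := tree_cut sym_e acyc conS uS vS euv.
have [dis _ _ _ _] := cut; have [lt1 lt2] := edge_cut_proper cut.
have side : {in P, forall B : {set V}, (B \subset S1) || (B \subset S2)}.
  move=> B BP; have [conB _] := solP B BP.
  apply: (edge_cut_side sym_e cut conB); first by rewrite -SE (partitionS pP BP).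
  apply: contra uv_apart => /andP[uB vB].
  by rewrite !(def_pblock (partition_trivIset pP) BP) ?uB ?vB.
rewrite SE in pP ltSn *.
have pP1 : partition (P ::&: S1) S1 := partition_ssetI pP dis side.
have pP2 : partition (P ::&: S2) S2.
  apply: (@partition_ssetI _ _ _ S1); rewrite 1?setUC 1?disjoint_sym //.
  by move=> B /side; rewrite orbC.
have solPI A B : B \in P ::&: A -> connected_set e B /\ always_solvable e B.
  by move=> /setIdP[/solP].
have le1 := IH S1 _ (leq_trans (proper_card lt1) (ltnSE ltSn)) con1 (conj pP1 (solPI S1)).
have le2 := IH S2 _ (leq_trans (proper_card lt2) (ltnSE ltSn)) con2 (conj pP2 (solPI S2)).
apply: leq_trans (_ : (nullity e S1).+1 + (nullity e S2).+1 <= _).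
  by rewrite addSn addnS ltnS (nullity_cut_le sym_e cut).
apply: leq_trans (leq_add le1 le2) _.
rewrite -(card_partitionU pP1 pP2 dis); apply/subset_leq_card.
by rewrite -!setI_powerset subUset !subsetIl.
Qed.

End SolvablePartition.

Theorem theorem4p4 (V : finType) (e : rel V) :
  is_tree e -> is_pi e (nullity e [set: V]).+1.
Proof.
move=> [[sym_e _] [conV acyc]]; split.
  have [P solP cardP] := exists_solvable_partition sym_e acyc conV.
  by exists P.
by move=> P solP; exact: (solvable_partition_card sym_e acyc conV solP).
Qed.
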